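(* Let $n\ge3$, $a>0$, $\sigma>1/2$. Let $V_0(x)=V_0(|x|)$ be a radially symmetric, radially decreasing, real-valued $C^1$ function on $\mathbb{R}^n$, and let $c=(c_1,\vec 0)\in\mathbb{R}^n$ with $\vec0\in\mathbb{R}^{n-1}$. Writing $x=(x_1,\vec y)\in\mathbb{R}\times\mathbb{R}^{n-1}$, we have, pointwise for $x\ne0$, $$ i[V_0(x),\gamma_{-c}+\gamma_c]\ \ge\ -2V_0'(|x|)\,\min\{f(|x+c|),f(|x-c|)\}\,\frac{2|\vec y|^2}{|x|}\,\frac{1}{|x|+|c|}\ \ge\ 0. $$
   Context: Notation: $g(r)=(1+ar^2)^{-\sigma/2}$; $f(r)=\int_0^r g^2(s)\,ds$; $F(x)=\int_0^{|x|}f(t)\,dt$; for $c\in\mathbb{R}^n$, $F_c(x)=F(x-c)$ and $\gamma_c=i[-\Delta,F_c]=-i(\nabla\cdot\nabla F_c+\nabla F_c\cdot\nabla)$. For a potential $V$, the commutator $i[V,\gamma_c]$ is the multiplication operator by the function $-2\nabla F_c\cdot\nabla V$. $V_0'$ denotes the radial derivative. *)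

From HB Require Import structures.
From mathcomp Require Import all_boot all_order all_algebra.
From mathcomp Require Import all_classical all_reals all_analysis.
Set Implicit Arguments. Unset Strict Implicit. Unset Printing Implicit Defensive.
Import Order.TTheory GRing.Theory Num.Theory.
Import numFieldNormedType.Exports.
Local Open Scope classical_set_scope.
Local Open Scope ring_scope.

Section Defs.
Variables (R : realType) (n : nat).

(* Euclidean norm on R^n (the library norm on 'rV_n is the sup norm). *)
Definition enorm (x : 'rV[R]_n) : R := Num.sqrt (\sum_(i < n) x 0 i ^+ 2).

Definition dotv (u v : 'rV[R]_n) : R := \sum_(i < n) u 0 i * v 0 i.

Definition evec (j : 'I_n) : 'rV[R]_n := delta_mx 0 j.

Definition grad (h : 'rV[R]_n -> R) (x : 'rV[R]_n) : 'rV[R]_n :=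
  \row_(j < n) derive h x (evec j).

Definition C1 (h : 'rV[R]_n -> R) : Prop :=
  forall j : 'I_n, (forall x, derivable h x (evec j)) /\
                   continuous (fun x => derive h x (evec j)).

Definition firstvec (c1 : R) : 'rV[R]_n :=
  \row_(j < n) (if (j : nat) == 0%N then c1 else 0).

(* |y|^2 where x = (x_1, y). *)
Definition ysq (x : 'rV[R]_n) : R :=
  \sum_(i < n | (i : nat) != 0%N) x 0 i ^+ 2.

Definition gfun (a sigma r : R) : R := powR (1 + a * r ^+ 2) (- sigma / 2).

Definition ffun (a sigma r : R) : R :=
  Rintegral (@lebesgue_measure R) `[0, r]%classic (fun s => gfun a sigma s ^+ 2).

Definition Ffun (a sigma : R) (x : 'rV[R]_n) : R :=
  Rintegral (@lebesgue_measure R) `[0, enorm x]%classic (ffun a sigma).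

Definition Fc (a sigma : R) (c : 'rV[R]_n) (x : 'rV[R]_n) : R := Ffun a sigma (x - c).

(* The function by which i[V, gamma_c] acts: -2 grad F_c . grad V. *)
Definition commVgamma (a sigma : R) (V : 'rV[R]_n -> R) (c : 'rV[R]_n)
  (x : 'rV[R]_n) : R :=
  - 2 * dotv (grad (Fc a sigma c) x) (grad V x).

End Defs.

(* Both gradients are explicit: grad F_c (x) = f(|x - c|) (x - c) / |x - c| and
   grad V0 (x) = V0'(|x|) x / |x|.  The first is obtained directly from the
   quadratic bound |F(s) - F(r) - (s - r) f(r)| <= (s - r)^2, valid because
   0 <= g^2 <= 1 makes f nondecreasing and 1-Lipschitz; since f(0) = 0 this also
   covers x = c.  Writing x = (x1, y) and c = (c1, 0), the sum of the two
   commutators is then -2 V0'(|x|) / |x| times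
     f(|x + c|) / |x + c| (x1 (x1 + c1) + |y|^2) + f(|x - c|) / |x - c| (x1 (x1 - c1) + |y|^2).
   As |x +- c| <= |x| + |c|, the two |y|^2 terms together are at least
   2 |y|^2 min f(|x +- c|) / (|x| + |c|).  The two cross terms have a nonnegative
   sum: if x1 c1 >= 0, only the x - c term can be negative, and it is dominated by
   the x + c term because |x - c| <= |x + c|, f is nondecreasing and
   x1 (c1 - x1) / |x - c| <= x1 (x1 + c1) / |x + c|.  Finally V0' <= 0. *)

From HB Require Import structures.
From mathcomp Require Import all_boot all_order all_algebra.
From mathcomp Require Import all_classical all_reals all_analysis.
From mathcomp Require Import ring lra measurable_realfun.
Set Implicit Arguments. Unset Strict Implicit. Unset Printing Implicit Defensive.
Import Order.TTheory GRing.Theory Num.Theory.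
Import numFieldNormedType.Exports.
Local Open Scope ring_scope.
Local Open Scope classical_set_scope.

Section Primitive.
Context {R : realType}.
Notation mu := (@lebesgue_measure R).
Implicit Types (h : R -> R) (r s : R).

Definition prim h r : R := Rintegral mu `[0, r] h.

Lemma prim_lt0 h r : r < 0 -> prim h r = 0.
Proof. by move=> r_lt0; rewrite /prim set_itv_ge ?Rintegral_set0 // bnd_simp -ltNge. Qed.

Lemma prim0 h : prim h 0 = 0.
Proof. by rewrite /prim set_itv1 Rintegral_set1. Qed.

Lemma lebesgue_measure_itv_oc r s : r <= s -> mu `]r, s] = (s - r)%:E.
Proof.
rewrite lebesgue_measure_itv /= lte_fin le_eqVlt => /predU1P[<-|->].
  by rewrite ltxx subrr.
by rewrite EFinB.
Qed.

Lemma bounded_integrable h (M : R) (A : set R) : measurable A ->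
  (mu A < +oo)%E -> measurable_fun setT h -> (forall t, A t -> `|h t| <= M) ->
  mu.-integrable A (EFin \o h).
Proof.
move=> mA Afin mh hM; apply: measurable_bounded_integrable => //.
  exact: measurable_funS mh.
exists M; split; first by rewrite num_real.
by move=> N MN t At /=; apply: le_trans (hM _ At) _; exact: ltW.
Qed.

Lemma Rintegral_itv_oc_bounds h (lo hi : R) r s : measurable_fun setT h ->
  r <= s -> (forall t, r < t <= s -> lo <= h t <= hi) ->
  lo * (s - r) <= Rintegral mu `]r, s] h <= hi * (s - r).
Proof.
move=> mh rs hb.
have mu_fin : (mu `]r, s] < +oo)%E by rewrite lebesgue_measure_itv_oc ?ltry.
have cst_int (k : R) : mu.-integrable `]r, s] (EFin \o fun=> k).
  exact: (bounded_integrable (M := `|k|)).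
have h_int : mu.-integrable `]r, s] (EFin \o h).
  apply: (bounded_integrable (M := `|lo| + `|hi|)) => // t /=.
  rewrite in_itv /= => /hb /andP[lo_h h_hi].
  have := ler_norm lo; have := ler_norm (- lo); have := ler_norm hi.
  have := normr_ge0 lo; have := normr_ge0 hi.
  rewrite normrN ler_norml => *; apply/andP; split; lra.
have cst_E (k : R) : Rintegral mu `]r, s] (fun=> k) = k * (s - r).
  by rewrite Rintegral_cst // (congr1 fine (lebesgue_measure_itv_oc rs)).
rewrite -!cst_E; apply/andP; split; apply: le_Rintegral => // t /=;
  by rewrite in_itv /= => /hb /andP[].
Qed.

Lemma primB_bounds h (M lo hi : R) r s : measurable_fun setT h ->
  (forall t, 0 <= t <= s -> `|h t| <= M) ->
  (forall t, r < t <= s -> lo <= h t <= hi) -> 0 <= r -> r <= s ->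
  lo * (s - r) <= prim h s - prim h r <= hi * (s - r).
Proof.
move=> mh hM hb r_ge0 rs; rewrite /prim Rintegral_itvB.
- exact: Rintegral_itv_oc_bounds.
- apply: (bounded_integrable (M := M)) => //.
  by rewrite lebesgue_measure_itv /=; case: ifP => _; rewrite ?ltry.
- by rewrite bnd_simp.
- by rewrite bnd_simp.
Qed.

Section UnitIntervalIntegrand.
Variable h : R -> R.
Hypothesis mh : measurable_fun setT h.
Hypothesis h01 : forall t, 0 <= h t <= 1.

Lemma primB_unit r s : 0 <= r -> r <= s -> 0 <= prim h s - prim h r <= s - r.
Proof.
move=> r_ge0 rs.
have := primB_bounds (M := 1) (lo := 0) (hi := 1) mh _ _ r_ge0 rs.
rewrite mul0r mul1r; apply=> t _; last exact: h01.
by have /andP[h0 h1] := h01 t; rewrite ger0_norm.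
Qed.

Lemma prim_unit_lipschitz r s : r <= s -> prim h s - prim h r <= s - r.
Proof.
move=> rs; have [r_lt0|r_ge0] := ltP r 0; last by have /andP[] := primB_unit r_ge0 rs.
rewrite (prim_lt0 _ r_lt0); have [s_lt0|s_ge0] := ltP s 0.
  by rewrite prim_lt0 // subrr subr_ge0.
have /andP[_] := primB_unit (lexx 0) s_ge0; rewrite prim0 !subr0; lra.
Qed.

Lemma prim_unit_nondecr : nondecreasing_fun (prim h).
Proof.
move=> r s rs; have [r_lt0|r_ge0] := ltP r 0; last first.
  by have /andP[] := primB_unit r_ge0 rs; rewrite subr_ge0.
rewrite (prim_lt0 _ r_lt0); have [s_lt0|s_ge0] := ltP s 0; first by rewrite prim_lt0.
by have /andP[] := primB_unit (lexx 0) s_ge0; rewrite prim0 subr0.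
Qed.

Lemma prim_unit_ge0 r : 0 <= prim h r.
Proof.
have [r_lt0|r_ge0] := ltP r 0; first by rewrite prim_lt0.
by rewrite -(prim0 h); exact: prim_unit_nondecr.
Qed.

End UnitIntervalIntegrand.

Section NondecreasingIntegrand.
Variable f : R -> R.
Hypothesis f_nd : nondecreasing_fun f.

Lemma primB_nondecr r s : 0 <= r -> r <= s ->
  f r * (s - r) <= prim f s - prim f r <= f s * (s - r).
Proof.
move=> r_ge0 rs; apply: (primB_bounds (M := `|f 0| + `|f s|)) r_ge0 rs.
- exact: nondecreasing_measurable.
- move=> t /andP[t_ge0 ts]; have := f_nd t_ge0; have := f_nd ts.
  have := ler_norm (f s); have := ler_norm (- f 0); have := normr_ge0 (f 0).
  have := normr_ge0 (f s); rewrite normrN => *.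
  rewrite ler_norml; apply/andP; split; lra.
- by move=> t /andP[rt ts]; rewrite !f_nd // ltW.
Qed.

Hypothesis f_lip : forall r s, r <= s -> f s - f r <= s - r.

Lemma prim_taylor r s : 0 <= r -> 0 <= s ->
  `|prim f s - prim f r - (s - r) * f r| <= (s - r) ^+ 2.
Proof.
move=> r_ge0 s_ge0; have [rs|sr] := leP r s.
  have /andP[lb ub] := primB_nondecr r_ge0 rs; have := f_lip rs.
  by rewrite ger0_norm; nra.
have /andP[lb ub] := primB_nondecr s_ge0 (ltW sr); have := f_lip (ltW sr).
by rewrite ger0_norm; nra.
Qed.

End NondecreasingIntegrand.
End Primitive.

Section Profile.
Context {R : realType}.
Variables a sigma : R.
Hypotheses (a_ge0 : 0 <= a) (sigma_ge0 : 0 <= sigma).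

Lemma gfun_sqr_measurable : measurable_fun setT (fun s : R => gfun a sigma s ^+ 2).
Proof.
apply: measurable_funX; apply: measurableT_comp (measurable_powR _) _.
by apply: measurable_funD => //; apply: measurable_funM.
Qed.

Lemma gfun_sqr_unit s : 0 <= gfun a sigma s ^+ 2 <= 1.
Proof.
rewrite exprn_ge0 ?powR_ge0 //=; apply: exprn_ile1; first exact: powR_ge0.
rewrite /gfun -[X in _ <= X](powRr0 (1 + a * s ^+ 2)).
apply: ler_powR; first by rewrite lerDl mulr_ge0 ?sqr_ge0.
by rewrite mulNr oppr_le0 divr_ge0.
Qed.

Lemma ffunE : ffun a sigma = prim (fun s => gfun a sigma s ^+ 2).
Proof. by []. Qed.

Lemma ffun_at0 : ffun a sigma 0 = 0.
Proof. by rewrite ffunE prim0. Qed.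

Lemma ffun_ge0 r : 0 <= ffun a sigma r.
Proof. by rewrite ffunE; exact: prim_unit_ge0 gfun_sqr_measurable gfun_sqr_unit r. Qed.

Lemma ffun_nondecr : nondecreasing_fun (ffun a sigma).
Proof. by rewrite ffunE; exact: prim_unit_nondecr gfun_sqr_measurable gfun_sqr_unit. Qed.

Lemma ffun_lipschitz r s : r <= s -> ffun a sigma s - ffun a sigma r <= s - r.
Proof.
by rewrite ffunE; apply: prim_unit_lipschitz; [exact: gfun_sqr_measurable | exact: gfun_sqr_unit].
Qed.

End Profile.

Section Euclidean.
Context {R : realType} {n : nat}.
Implicit Types (x z : 'rV[R]_n) (j : 'I_n) (h : R).

Lemma enorm_ge0 z : 0 <= enorm z.
Proof. exact: sqrtr_ge0. Qed.

Lemma enorm_sqr z : enorm z ^+ 2 = \sum_(i < n) z 0 i ^+ 2.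
Proof. by rewrite /enorm sqr_sqrtr // sumr_ge0 // => i _; rewrite sqr_ge0. Qed.

Lemma enorm_gt0 z : z != 0 -> 0 < enorm z.
Proof.
apply: contraNT; rewrite -leNgt => z_le0; apply/eqP/rowP => i; rewrite mxE.
have : enorm z ^+ 2 == 0 by rewrite expf_eq0 /= eq_le z_le0 enorm_ge0.
rewrite enorm_sqr psumr_eq0 => [/allP/(_ i (mem_index_enum _))|i' _].
  by rewrite sqrf_eq0 => /eqP.
exact: sqr_ge0.
Qed.

Lemma coord_sqr_le z j : z 0 j ^+ 2 <= enorm z ^+ 2.
Proof. by rewrite enorm_sqr (bigD1 j) //= lerDl sumr_ge0 // => i _; rewrite sqr_ge0. Qed.

Lemma coord_norm_le z j : `|z 0 j| <= enorm z.
Proof. by rewrite -ler_sqr ?nnegrE ?enorm_ge0 // real_normK ?num_real ?coord_sqr_le. Qed.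

Lemma enorm_evecD_sqr z j h :
  enorm (h *: evec R j + z) ^+ 2 = enorm z ^+ 2 + 2 * h * z 0 j + h ^+ 2.
Proof.
rewrite !enorm_sqr (bigD1 j) //= [in RHS](bigD1 j) //= !mxE !eqxx mulr1.
rewrite (eq_bigr (fun i => z 0 i ^+ 2)) => [|i ij]; first by ring.
by rewrite !mxE eqxx (negbTE ij) mulr0 add0r.
Qed.

Lemma enorm_scale_evec j t : enorm (t *: evec R j) = `|t|.
Proof.
rewrite /enorm (bigD1 j) //= big1 => [|i ij]; last first.
  by rewrite !mxE eqxx (negbTE ij) mulr0 expr2 mulr0.
by rewrite !mxE !eqxx mulr1 addr0 sqrtr_sqr.
Qed.

Lemma enorm_evecD_dist z j h : `|enorm (h *: evec R j + z) - enorm z| <= `|h|.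
Proof.
set P := enorm (h *: evec R j + z); set P0 := enorm z.
have P_ge0 : 0 <= P := enorm_ge0 _; have P0_ge0 : 0 <= P0 := enorm_ge0 _.
have zj : z 0 j ^+ 2 <= P0 ^+ 2 := coord_sqr_le z j.
have eP : P ^+ 2 = P0 ^+ 2 + 2 * h * z 0 j + h ^+ 2 := enorm_evecD_sqr z j h.
clearbody P P0.
have cross_le : P0 ^+ 2 + h * z 0 j <= P0 * P.
  apply: le_trans (ler_norm _) _; rewrite -[P0 * P]ger0_norm ?mulr_ge0 //.
  rewrite -ler_sqr ?nnegrE ?normr_ge0 // !real_normK ?num_real // exprMn eP.
  have : 0 <= h ^+ 2 * (P0 ^+ 2 - z 0 j ^+ 2) by rewrite mulr_ge0 ?sqr_ge0 ?subr_ge0.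
  by nra.
rewrite -ler_sqr ?nnegrE ?normr_ge0 // !real_normK ?num_real //.
rewrite (_ : (P - P0) ^+ 2 = P ^+ 2 - 2 * (P0 * P) + P0 ^+ 2); last by ring.
by rewrite eP; lra.
Qed.

Lemma enorm_evecD_quotient z j h : 0 < enorm z -> h != 0 ->
  `|(enorm (h *: evec R j + z) - enorm z) / h - z 0 j / enorm z| <= 2 * `|h| / enorm z.
Proof.
set P := enorm (h *: evec R j + z); set P0 := enorm z => P0_gt0 h_neq0.
have P_ge0 : 0 <= P := enorm_ge0 _.
have eP : P ^+ 2 = P0 ^+ 2 + 2 * h * z 0 j + h ^+ 2 := enorm_evecD_sqr z j h.
have zj : `|z 0 j| <= P0 := coord_norm_le z j.
have dist : `|P0 - P| <= `|h| by rewrite distrC; exact: enorm_evecD_dist.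
clearbody P P0.
have PP0_gt0 : 0 < P + P0 by lra.
have diffE : P - P0 = h * (2 * z 0 j + h) / (P + P0).
  apply: (mulIf (lt0r_neq0 PP0_gt0)); rewrite divfK ?gt_eqF // -subr_sqr eP.
  by ring.
have -> : (P - P0) / h - z 0 j / P0 = (z 0 j * (P0 - P) + h * P0) / (P0 * (P + P0)).
  by rewrite diffE; field; rewrite h_neq0 !gt_eqF.
have num_le : `|z 0 j * (P0 - P) + h * P0| <= 2 * `|h| * P0.
  apply: le_trans (ler_normD _ _) _; rewrite !normrM (gtr0_norm P0_gt0).
  by have := ler_pM (normr_ge0 _) (normr_ge0 _) zj dist; lra.
rewrite normrM normfV (gtr0_norm (mulr_gt0 P0_gt0 PP0_gt0)) ler_pdivrMr ?mulr_gt0 //.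
apply: le_trans num_le _.
rewrite (_ : 2 * `|h| / P0 * _ = 2 * `|h| * (P + P0)); last by field; rewrite gt_eqF.
by rewrite ler_wpM2l ?mulr_ge0 // lerDr.
Qed.

End Euclidean.

Section DerivativeCriteria.
Context {R : realType}.

Lemma is_derive_linear_error (V : normedModType R) (phi : V -> R) (x v : V) (L K : R) :
  (forall h : R, h != 0 -> `|h^-1 * (phi (h *: v + x) - phi x) - L| <= K * `|h|) ->
  is_derive x v phi L.
Proof.
move=> err; have K1_gt0 : 0 < `|K| + 1 by rewrite ltr_pwDr.
have quot_cvg : (fun h : R => h^-1 *: ((phi \o shift x) (h *: v) - phi x)) @ 0^' --> L.
  apply/cvgrPdist_le => e e_gt0; exists (e / (`|K| + 1)); first by rewrite /= divr_gt0.
  move=> h /= h_small h_neq0; rewrite /ball /= sub0r normrN in h_small.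
  rewrite distrC /= /shift; apply: le_trans (err _ h_neq0) _.
  apply: le_trans (_ : (`|K| + 1) * `|h| <= e).
    by rewrite ler_wpM2r // (le_trans (ler_norm K)) // lerDl.
  by rewrite -ler_pdivlMl // mulrC ltW.
split; first by apply/cvg_ex; exists L.
exact: cvg_lim quot_cvg.
Qed.

Lemma derive_lineE (V : normedModType R) (phi : V -> R) (x v : V) :
  derivable phi x v = derivable (fun h : R => phi (h *: v + x)) 0 1 /\
  'D_v phi x = 'D_1 (fun h : R => phi (h *: v + x)) 0.
Proof.
have quotE : (fun h : R => h^-1 *: ((phi \o shift x) (h *: v) - phi x)) =
    (fun h : R => h^-1 *: (((fun t : R => phi (t *: v + x)) \o shift 0) (h *: 1)
                            - phi (0 *: v + x))).
  by apply/funext => h /=; rewrite /shift /= scale0r add0r addr0 [h *: 1]mulr1.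
by rewrite /derivable /derive quotE.
Qed.

Lemma is_derive_line (V : normedModType R) (phi : V -> R) (x v : V) (L : R) :
  is_derive (0 : R) 1 (fun h : R => phi (h *: v + x)) L -> is_derive x v phi L.
Proof. by move=> [der val]; have [derE DE] := derive_lineE phi x v; split; rewrite ?derE ?DE. Qed.

Lemma derive1_le0_nonincr (v : R -> R) r : 0 < r -> derivable v r 1 ->
  (forall s t : R, 0 <= s -> s <= t -> v t <= v s) -> derive1 v r <= 0.
Proof.
move=> r_gt0 v_der v_nonincr; rewrite derive1E /derive; apply: limr_le => //.
exists r => // h /= h_small h_neq0; rewrite /ball /= sub0r normrN in h_small.
rewrite /shift /= [h *: 1]mulr1; change (h^-1 * (v (h + r) - v r) <= 0).
have [h_gt0|h_le0] := ltP 0 h.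
  by rewrite pmulr_rle0 ?invr_gt0 // subr_le0 v_nonincr ?(ltW r_gt0) // lerDr ltW.
have h_lt0 : h < 0 by rewrite lt_neqAle h_neq0 h_le0.
rewrite nmulr_rle0 ?invr_lt0 // subr_ge0 v_nonincr //; last by rewrite gerDr.
by move: h_small; rewrite ltr0_norm //; lra.
Qed.

End DerivativeCriteria.

Section EuclideanDerivatives.
Context {R : realType} {n : nat}.
Implicit Types (x z c : 'rV[R]_n) (j : 'I_n).

Lemma is_derive_enorm_line x j : 0 < enorm x ->
  is_derive (0 : R) 1 (fun h => enorm (h *: evec R j + x)) (x 0 j / enorm x).
Proof.
move=> x_gt0; apply: (is_derive_linear_error (K := 2 / enorm x)) => h h_neq0 /=.
rewrite [h *: 1]mulr1 addr0 scale0r add0r mulrC mulrAC.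
exact: enorm_evecD_quotient.
Qed.

Lemma is_derive_radial (v : R -> R) x j : 0 < enorm x -> derivable v (enorm x) 1 ->
  is_derive x (evec R j) (fun y => v (enorm y)) (derive1 v (enorm x) * (x 0 j / enorm x)).
Proof.
move=> x_gt0 /derivableP v_der.
apply: is_derive_line; rewrite derive1E.
have v_der0 : is_derive (enorm (0 *: evec R j + x)) 1 v ('D_1 v (enorm x)).
  by rewrite scale0r add0r.
exact: (is_derive1_comp (g := fun h : R => enorm (h *: evec R j + x)) v_der0
  (is_derive_enorm_line j x_gt0)).
Qed.

Lemma is_derive_prim_enorm (f : R -> R) c x j : nondecreasing_fun f ->
  (forall r s, r <= s -> f s - f r <= s - r) -> f 0 = 0 ->
  is_derive x (evec R j) (fun y => prim f (enorm (y - c)))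
    (f (enorm (x - c)) / enorm (x - c) * (x - c) 0 j).
Proof.
move=> f_nd f_lip f0; set z := x - c; set P0 := enorm z.
apply: (is_derive_linear_error (K := 1 + 2 * f P0 / P0)) => h h_neq0.
rewrite -addrA -/z; set P := enorm (h *: evec R j + z).
have taylor := prim_taylor f_nd f_lip (enorm_ge0 z) (enorm_ge0 (h *: evec R j + z)).
have dist_sqr : (P - P0) ^+ 2 <= h ^+ 2.
  rewrite -real_normK ?num_real // -[h ^+ 2]real_normK ?num_real //.
  by rewrite ler_sqr ?nnegrE ?normr_ge0 ?enorm_evecD_dist.
have -> : h^-1 * (prim f P - prim f P0) - f P0 / P0 * z 0 j =
    h^-1 * (prim f P - prim f P0 - (P - P0) * f P0) + f P0 * ((P - P0) / h - z 0 j / P0).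
  by ring.
rewrite (mulrDl 1) mul1r; apply: le_trans (ler_normD _ _) _; apply: lerD.
  rewrite normrM normfV ler_pdivrMl ?normr_gt0 // -expr2 real_normK ?num_real //.
  exact: le_trans taylor dist_sqr.
have [P0_eq0|P0_neq0] := eqVneq P0 0; first by rewrite P0_eq0 f0 !mul0r normr0.
have P0_gt0 : 0 < P0 by rewrite lt_def P0_neq0 enorm_ge0.
have fP0_ge0 : 0 <= f P0 by rewrite -f0 f_nd // ltW.
rewrite normrM (ger0_norm fP0_ge0) (_ : 2 * f P0 / P0 * _ = f P0 * (2 * `|h| / P0)).
  by rewrite ler_wpM2l // enorm_evecD_quotient.
by ring.
Qed.

Lemma derivable_radial_profile (v : R -> R) r : (0 < n)%N ->
  C1 (fun x : 'rV[R]_n => v (enorm x)) -> 0 < r -> derivable v r 1.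
Proof.
move=> n_gt0 vC1 r_gt0; pose j : 'I_n := Ordinal n_gt0.
pose g t := v (enorm (t *: evec R j)).
have g_der : derivable g r 1.
  have [-> _] := derive_lineE g r 1.
  have [derE _] := derive_lineE (fun y => v (enorm y)) (r *: evec R j) (evec R j).
  rewrite (_ : (fun h : R => g (h *: 1 + r)) =
               (fun h : R => v (enorm (h *: evec R j + r *: evec R j)))) -?derE.
    exact: (vC1 j).1.
  by apply/funext => h; rewrite /g [h *: 1]mulr1 scalerDl.
apply: near_eq_derivable g_der; apply: filterS (lt_nbhsr r_gt0) => t t_gt0.
by rewrite /g enorm_scale_evec gtr0_norm.
Qed.

Lemma commVgamma_radialE (a sigma : R) (v : R -> R) c x : 0 <= a -> 0 <= sigma ->
  0 < enorm x -> derivable v (enorm x) 1 ->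
  commVgamma a sigma (fun y => v (enorm y)) c x =
    - 2 * derive1 v (enorm x) / enorm x *
      (ffun a sigma (enorm (x - c)) / enorm (x - c) * dotv (x - c) x).
Proof.
move=> a_ge0 sigma_ge0 x_gt0 v_der; rewrite /commVgamma /dotv !mulr_sumr.
apply: eq_bigr => j _; rewrite !mxE.
have Fc_der : is_derive x (evec R j) (Fc a sigma c) _ :=
  is_derive_prim_enorm c x j (ffun_nondecr a_ge0 sigma_ge0)
    (ffun_lipschitz a_ge0 sigma_ge0) (ffun_at0 a sigma).
have [_ ->] := Fc_der; have [_ ->] := is_derive_radial j x_gt0 v_der.
by rewrite !mxE; ring.
Qed.

End EuclideanDerivatives.

Section KeyInequality.
Context {R : realType}.

(* The hypothesis on [P = 0] handles the junk value [F / 0 = 0]. *)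
Lemma ler_wpdiv (m F P M : R) : 0 <= m -> m <= F -> 0 <= P -> P <= M ->
  (P = 0 -> F = 0) -> m / M <= F / P.
Proof.
move=> m_ge0 mF P_ge0 PM PF; have [P_eq0|P_neq0] := eqVneq P 0.
  have m_eq0 : m = 0 by apply/eqP; rewrite eq_le m_ge0 andbT -(PF P_eq0).
  by rewrite m_eq0 P_eq0 (PF P_eq0) !mul0r.
have P_gt0 : 0 < P by rewrite lt_def P_neq0.
rewrite ler_pdivrMr ?(lt_le_trans P_gt0 PM) // mulrAC ler_pdivlMr //.
exact: ler_pM.
Qed.

Variables (f : R -> R) (x1 y2 : R).
Hypotheses (f_nd : nondecreasing_fun f) (f0 : f 0 = 0) (y2_ge0 : 0 <= y2).

(* With [y2 = |y|^2], [rad (x1 + u)] is the Euclidean norm of [x + u e_1]. *)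
Let rad u := Num.sqrt (u ^+ 2 + y2).

Let rad_ge0 u : 0 <= rad u.
Proof. exact: sqrtr_ge0. Qed.

Let rad_sqr u : rad u ^+ 2 = u ^+ 2 + y2.
Proof. by rewrite sqr_sqrtr // addr_ge0 ?sqr_ge0. Qed.

Let f_rad_ge0 u : 0 <= f (rad u).
Proof. by rewrite -f0 f_nd. Qed.

Lemma rad_addr_le u : rad (x1 + u) <= rad x1 + `|u|.
Proof.
rewrite -ler_sqr ?nnegrE ?addr_ge0 // sqrrD !rad_sqr sqrrD real_normK ?num_real //.
have x1_le : `|x1| <= rad x1.
  by rewrite -ler_sqr ?nnegrE // real_normK ?num_real // rad_sqr lerDl.
have := ler_pM (normr_ge0 _) (normr_ge0 _) x1_le (lexx `|u|).
by rewrite -normrM => /(le_trans (ler_norm (x1 * u))); lra.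
Qed.

Lemma rad_subr_le_addr u : 0 <= x1 * u -> rad (x1 - u) <= rad (x1 + u).
Proof. by move=> xu_ge0; rewrite ler_wsqrtr // lerD2r; nra. Qed.

Lemma cross_terms_ge0 u :
  0 <= f (rad (x1 + u)) / rad (x1 + u) * (x1 * (x1 + u)) +
       f (rad (x1 - u)) / rad (x1 - u) * (x1 * (x1 - u)).
Proof.
wlog xu_ge0 : u / 0 <= x1 * u.
  move=> wlog_u; have [|xu_lt0] := leP 0 (x1 * u); first exact: wlog_u.
  have := wlog_u (- u); rewrite opprK addrC; apply.
  by rewrite mulrN oppr_ge0 ltW.
set Pp := rad (x1 + u); set Pm := rad (x1 - u).
have plus_ge0 : 0 <= x1 * (x1 + u) by rewrite mulrDr addr_ge0 // -expr2 sqr_ge0.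
have [minus_ge0|minus_lt0] := leP 0 (x1 * (x1 - u)).
  by apply: addr_ge0; rewrite mulr_ge0 ?divr_ge0 ?f_rad_ge0 ?rad_ge0.
have [Pm_eq0|Pm_neq0] := eqVneq Pm 0.
  by rewrite Pm_eq0 f0 !mul0r addr0 mulr_ge0 ?divr_ge0 ?f_rad_ge0 ?rad_ge0.
have Pm_gt0 : 0 < Pm by rewrite lt_def Pm_neq0 rad_ge0.
have PmPp : Pm <= Pp := rad_subr_le_addr xu_ge0.
have Pp_gt0 : 0 < Pp := lt_le_trans Pm_gt0 PmPp.
have minus_gt0 : 0 < x1 * (u - x1).
  by rewrite (_ : x1 * (u - x1) = - (x1 * (x1 - u))) ?oppr_gt0 //; ring.
have ratio_le : x1 * (u - x1) / Pm <= x1 * (x1 + u) / Pp.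
  rewrite ler_pdivrMr // mulrAC ler_pdivlMr //.
  rewrite -ler_sqr ?nnegrE ?(mulr_ge0 (ltW minus_gt0) (ltW Pp_gt0))
    ?(mulr_ge0 plus_ge0 (ltW Pm_gt0)) //.
  rewrite !exprMn (rad_sqr (x1 + u)) (rad_sqr (x1 - u)).
  have -> : x1 ^+ 2 * (x1 + u) ^+ 2 * ((x1 - u) ^+ 2 + y2) =
    x1 ^+ 2 * (u - x1) ^+ 2 * ((x1 + u) ^+ 2 + y2) + 4 * (x1 ^+ 2 * y2 * (x1 * u)) by ring.
  by rewrite lerDl mulr_ge0 // mulr_ge0 // mulr_ge0 ?sqr_ge0.
have := ler_pM (f_rad_ge0 _) (divr_ge0 (ltW minus_gt0) (ltW Pm_gt0)) (f_nd PmPp) ratio_le.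
rewrite (_ : f Pm / Pm * (x1 * (x1 - u)) = - (f Pm * (x1 * (u - x1) / Pm))); last by ring.
rewrite (_ : f Pp / Pp * (x1 * (x1 + u)) = f Pp * (x1 * (x1 + u) / Pp)); last by ring.
by rewrite subr_ge0.
Qed.

Lemma key_inequality u :
  2 * y2 * (Num.min (f (rad (x1 + u))) (f (rad (x1 - u))) / (rad x1 + `|u|)) <=
    f (rad (x1 + u)) / rad (x1 + u) * (x1 * (x1 + u) + y2) +
    f (rad (x1 - u)) / rad (x1 - u) * (x1 * (x1 - u) + y2).
Proof.
set m := Num.min _ _.
have m_ge0 : 0 <= m by rewrite le_min !f_rad_ge0.
have f_at0 P : P = 0 -> f P = 0 by move->.
have plus_le : m / (rad x1 + `|u|) <= f (rad (x1 + u)) / rad (x1 + u).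
  apply: ler_wpdiv m_ge0 _ (rad_ge0 _) (rad_addr_le u) (f_at0 _).
  by rewrite ge_min lexx.
have minus_le : m / (rad x1 + `|u|) <= f (rad (x1 - u)) / rad (x1 - u).
  apply: ler_wpdiv m_ge0 _ (rad_ge0 _) _ (f_at0 _); first by rewrite ge_min lexx orbT.
  by rewrite -(normrN u); exact: rad_addr_le.
have := cross_terms_ge0 u.
have := ler_wpM2l y2_ge0 plus_le; have := ler_wpM2l y2_ge0 minus_le.
clearbody m; lra.
Qed.

End KeyInequality.

Section FirstAxis.
Context {R : realType} {n : nat} (j0 : 'I_n).
Hypothesis j0_eq0 : nat_of_ord j0 = 0%N.
Implicit Types (x : 'rV[R]_n) (b : R).

Lemma firstvecE b : firstvec n b = b *: evec R j0.
Proof.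
apply/rowP => i; rewrite !mxE eqxx /= (_ : (i == j0) = ((i : nat) == 0%N)).
  by case: eqP; rewrite ?mulr1 ?mulr0.
by rewrite -j0_eq0.
Qed.

Lemma ysq_ge0 x : 0 <= ysq x.
Proof. by apply: sumr_ge0 => i _; rewrite sqr_ge0. Qed.

Let ysqE x : ysq x = \sum_(i < n | i != j0) x 0 i ^+ 2.
Proof. by apply: eq_bigl => i; rewrite -j0_eq0. Qed.

Lemma enorm_ysq x : enorm x = Num.sqrt (x 0 j0 ^+ 2 + ysq x).
Proof. by rewrite /enorm (bigD1 j0) //= ysqE. Qed.

Lemma enorm_addr_evec x b :
  enorm (x + b *: evec R j0) = Num.sqrt ((x 0 j0 + b) ^+ 2 + ysq x).
Proof.
rewrite enorm_ysq !mxE !eqxx mulr1 !ysqE; congr (Num.sqrt (_ + _)).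
by apply: eq_bigr => i ij; rewrite !mxE (negbTE ij) mulr0 addr0.
Qed.

Lemma dotv_addr_evec x b : dotv (x + b *: evec R j0) x = x 0 j0 * (x 0 j0 + b) + ysq x.
Proof.
rewrite /dotv (bigD1 j0) //= ysqE !mxE !eqxx mulr1 mulrC; congr (_ + _).
by apply: eq_bigr => i ij; rewrite !mxE (negbTE ij) mulr0 addr0 expr2.
Qed.

End FirstAxis.

Theorem lemma2p2 (R : realType) (n : nat) (a sigma : R) (v : R -> R) (c1 : R)
  (hn : (3 <= n)%N) (ha : 0 < a) (hsigma : 1 / 2 < sigma)
  (hC1 : C1 (fun x : 'rV[R]_n => v (enorm x)))
  (hdecr : forall r s : R, 0 <= r -> r <= s -> v s <= v r) :
  let V0 := fun x : 'rV[R]_n => v (enorm x) in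
  let c := firstvec n c1 in
  forall x : 'rV[R]_n, x != 0 ->
    commVgamma a sigma V0 (- c) x + commVgamma a sigma V0 c x >=
      - 2 * derive1 v (enorm x)
        * Num.min (ffun a sigma (enorm (x + c))) (ffun a sigma (enorm (x - c)))
        * (2 * ysq x / enorm x) * (1 / (enorm x + enorm c))
    /\
    - 2 * derive1 v (enorm x)
        * Num.min (ffun a sigma (enorm (x + c))) (ffun a sigma (enorm (x - c)))
        * (2 * ysq x / enorm x) * (1 / (enorm x + enorm c)) >= 0.
Proof.
move=> V0 c x x_neq0.
have n_gt0 : (0 < n)%N by apply: leq_trans hn.
pose j0 : 'I_n := Ordinal n_gt0.
have sigma_ge0 : 0 <= sigma by apply: le_trans (ltW hsigma); rewrite divr_ge0.
have x_gt0 : 0 < enorm x := enorm_gt0 x_neq0.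
have v_der := derivable_radial_profile n_gt0 hC1 x_gt0.
have Dv_le0 := derive1_le0_nonincr x_gt0 v_der hdecr.
rewrite /V0 !(commVgamma_radialE _ (ltW ha) sigma_ge0 x_gt0 v_der).
rewrite opprK /c (firstvecE (j0 := j0)) // -scaleNr.
rewrite !enorm_addr_evec // !dotv_addr_evec // enorm_scale_evec.
have := key_inequality (x 0 j0) (ffun_nondecr (ltW ha) sigma_ge0) (ffun_at0 a sigma)
  (ysq_ge0 x) c1.
rewrite -(enorm_ysq (j0 := j0)) //.
set N := enorm x; set D := derive1 v N; set m := Num.min _ _ => key.
have k_ge0 : 0 <= - 2 * D / N.
  by rewrite divr_ge0 ?(ltW x_gt0) // mulNr -mulrN mulr_ge0 ?oppr_ge0.
rewrite -mulrDr (_ : - 2 * D * m * _ * _ = - 2 * D / N * (2 * ysq x * (m / (N + `|c1|))));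
  last by ring.
split; first exact: ler_wpM2l.
have m_ge0 : 0 <= m by rewrite le_min !ffun_ge0 // ltW.
have NC_ge0 : 0 <= N + `|c1| by rewrite addr_ge0 ?(ltW x_gt0).
by rewrite mulr_ge0 // mulr_ge0 ?divr_ge0 // mulr_ge0 ?ysq_ge0.
Qed.
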